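(* Let $k$ be a number field, $v$ an archimedean place of $k$, $\lambda$ a partition with $t\le n$ parts, and $g\in\mathrm{GL}_n(k)$, viewed in $\mathrm{GL}_n(k_v)$ via $v$. Then $$H_v\big(\pi_\lambda(g)e_{U(\lambda)}\big)=\Big(\Delta_{\lambda^*_1}(g^*g)\,\Delta_{\lambda^*_2}(g^*g)\cdots\Delta_{\lambda^*_s}(g^*g)\Big)^{d_v/2}\,H_v\big(e_{U(\lambda)}\big),$$ where $g^*$ is the transpose of $g$ if $k_v=\mathbb{R}$ and its conjugate transpose if $k_v=\mathbb{C}$, and $\Delta_\ell$ denotes the leading principal $\ell\times\ell$ minor.
   Context: $k_v$ is the completion of $k$ at $v$ ($\mathbb{R}$ or $\mathbb{C}$) and $d_v=[k_v:\mathbb{R}]$. A partition $\lambda=(\lambda_1\ge\dots\ge\lambda_t>0)$ has $s=\lambda_1$ columns of heights $\lambda^*_\ell=\#\{i:\lambda_i\ge\ell\}$. Let $Z=(z_{a,i})_{1\le a\le t,1\le i\le n}$ be indeterminates. For $y_1,\dots,y_p\in k_v^n$ let $\Delta(y_1,\dots,y_p)=\det((Zy_b)_a)_{1\le a,b\le p}$, $(Zy)_a=\sum_i z_{a,i}(y)_i$; for a family $Y=(y_{\ell,b})_{1\le\ell\le s,1\le b\le\lambda^*_\ell}$ put $\phi_Y=\prod_\ell\Delta(y_{\ell,1},\dots,y_{\ell,\lambda^*_\ell})$. The Schur module $\mathbb{S}^\lambda(k_v^n)$ is the span of the $\phi_Y$ in $k_v[Z]$, with action $(\pi_\lambda(g)P)(Z)=P(Zg)$.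 The highest weight vector is $e_{U(\lambda)}=\prod_{\ell=1}^s\det(z_{a,b})_{1\le a,b\le\lambda^*_\ell}$. On $k_v[Z]$ consider the inner product (Hermitian if $k_v=\mathbb{C}$) making distinct monomials orthogonal with $\langle\prod z_{a,i}^{\alpha_{a,i}},\prod z_{a,i}^{\alpha_{a,i}}\rangle=\prod\alpha_{a,i}!$, and set $H_v(X)=\frac{\dim\mathbb{S}^\lambda(k^n)}{n!}\langle X,X\rangle^{d_v/2}$ for $X\in\mathbb{S}^\lambda(k_v^n)$. *)

From HB Require Import structures.
From mathcomp Require Import all_boot all_order all_algebra all_field.
From mathcomp Require Import mpoly.
From Stdlib Require Import ClassicalEpsilon ClassicalDescription.

Set Implicit Arguments.
Unset Strict Implicit.
Unset Printing Implicit Defensive.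

Import Order.TTheory GRing.Theory Num.Theory.
Local Open Scope ring_scope.

Definition is_partition (lam : seq nat) : Prop :=
  sorted geq lam /\ all (fun x => 0 < x)%N lam.

Definition nparts (lam : seq nat) : nat := size lam.
Definition ncols (lam : seq nat) : nat := head 0%N lam.
Definition colh (lam : seq nat) (l : nat) : nat := count (fun x => l <= x)%N lam.

(* Polynomials in the t*n indeterminates Z = (z_{a,i}), a < t, i < n;  *)
(* z_{a,i} is the variable number a*n+i (0-based indices).             *)
Section Poly.
Variables (R : comNzRingType) (t n : nat).

Definition zvar (a i : nat) : {mpoly R[t * n]} :=
  if (i < n)%N then
    match (insub (a * n + i)%N : option 'I_(t * n)) with
    | Some k => 'X_k
    | None => 0
    end
  else 0.

(* entry (i,j) (0-based) of a matrix, 0 outside the range *)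
Definition mxnat (m p : nat) (A : 'M[R]_(m, p)) (i j : nat) : R :=
  match (insub i : option 'I_m), (insub j : option 'I_p) with
  | Some i', Some j' => A i' j'
  | _, _ => 0
  end.

Definition Zy (y : 'rV[R]_n) (a : nat) : {mpoly R[t * n]} :=
  \sum_(i < n) zvar a i * (y 0 i)%:MP.

Definition DeltaZ (p : nat) (y : nat -> 'rV[R]_n) : {mpoly R[t * n]} :=
  \det (\matrix_(a < p, b < p) Zy (y b) a).

Definition phiY (lam : seq nat) (Y : nat -> nat -> 'rV[R]_n) : {mpoly R[t * n]} :=
  \prod_(1 <= l < (ncols lam).+1) DeltaZ (colh lam l) (Y l).

Definition eU (lam : seq nat) : {mpoly R[t * n]} :=
  \prod_(1 <= l < (ncols lam).+1)
     \det (\matrix_(a < colh lam l, b < colh lam l) zvar a b).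

(* the representation pi_lambda(g) P (Z) = P(Z g) *)
Definition piact (g : 'M[R]_n) (P : {mpoly R[t * n]}) : {mpoly R[t * n]} :=
  comp_mpoly [tuple (\sum_(j < n) zvar (k %/ n) j * (mxnat g j (k %% n))%:MP)
             | k < t * n] P.
End Poly.

(* dim S^lambda(F^n): the size of a basis (over F) of the F-span of the *)
(* phi_Y, Y ranging over families of vectors of F^n.                    *)
Definition schur_basis_size (F : fieldType) (n : nat) (lam : seq nat) (d : nat) : Prop :=
  exists Ys : 'I_d -> nat -> nat -> 'rV[F]_n,
    (forall c : 'I_d -> F,
        \sum_(i < d) c i *: phiY (size lam) lam (Ys i) = 0 -> forall i, c i = 0)
    /\ (forall Y : nat -> nat -> 'rV[F]_n, exists c : 'I_d -> F,
          phiY (size lam) lam Y = \sum_(i < d) c i *: phiY (size lam) lam (Ys i)).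

Definition schur_dim (F : fieldType) (n : nat) (lam : seq nat) : nat :=
  epsilon (inhabits 0%N) (schur_basis_size F n lam).

Definition ipZ (N : nat) (P Q : {mpoly algC[N]}) : algC :=
  \sum_(m <- msupp P) P@_m * (Q@_m)^* * (\prod_(j < N) (m j)`!)%:R.

(* archimedean place given by an embedding sigma : k -> C (here algC);  *)
Definition is_real_place (k : fieldType) (sigma : {rmorphism k -> algC}) : Prop :=
  forall x : k, sigma x \is Num.real.

Definition dv (k : fieldType) (sigma : {rmorphism k -> algC}) : nat :=
  if excluded_middle_informative (is_real_place sigma) then 1%N else 2%N.

Definition powhalf (d : nat) (x : algC) : algC := sqrtC x ^+ d.

Definition Hv (k : fieldType) (sigma : {rmorphism k -> algC}) (n : nat)
    (lam : seq nat) (X : {mpoly algC[size lam * n]}) : algC :=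
  ((schur_dim k n lam)%:R / (n`!)%:R) * powhalf (dv sigma) (ipZ X X).

Definition gstar (k : fieldType) (sigma : {rmorphism k -> algC}) (n : nat)
    (g : 'M[algC]_n) : 'M[algC]_n :=
  if excluded_middle_informative (is_real_place sigma) then g^T
  else (map_mx (fun z : algC => z^*) g)^T.

Definition lpminor (n : nat) (A : 'M[algC]_n) (l : nat) : algC :=
  \det (\matrix_(i < l, j < l) mxnat A i j).

(* The inner product is Fischer's: multiplication by [z_(a,i)] is adjoint to
   [d/dz_(a,i)], hence the substitution [P(Z) |-> P(Z h)] is adjoint to the
   substitution by the conjugate transpose of [h], and [pi_lambda(g)] is such a
   substitution (by a block diagonal matrix).  So <pi(g) e, pi(g) e> equals
   <e, pi(g^* g) e>.  As [g^* g] is positive definite, it factors as [L U] with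
   [L] lower and [U] upper triangular.  An upper triangular matrix multiplies
   the highest weight vector [e] by [prod_l prod_(j < lambda^*_l) U_jj], and on
   the other side of the inner product so does [L^*].  These diagonal products
   are exactly the leading principal minors of [L U = g^* g]. *)

From HB Require Import structures.
From mathcomp Require Import all_boot all_order all_algebra all_field.
From mathcomp Require Import mpoly.
From mathcomp Require Import ring.
From Stdlib Require Import ClassicalDescription.
Import Order.TTheory GRing.Theory Num.Theory.
Local Open Scope ring_scope.

Set Implicit Arguments.
Unset Strict Implicit.
Unset Printing Implicit Defensive.

Lemma big_uniq_support (V : nmodType) (T : eqType) (s1 s2 : seq T) (F : T -> V) :
  uniq s1 -> uniq s2 ->
  (forall x, x \in s1 -> x \notin s2 -> F x = 0) ->
  (forall x, x \in s2 -> x \notin s1 -> F x = 0) ->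
  \sum_(x <- s1) F x = \sum_(x <- s2) F x.
Proof.
move=> u1 u2 F1 F2.
rewrite (bigID (mem s2)) [in RHS](bigID (mem s1)) /=.
rewrite [X in _ + X]big1_seq ?[X in _ = _ + X]big1_seq ?addr0; last 2 first.
- by move=> x /andP[/negP ? ?]; apply: F2 => //; apply/negP.
- by move=> x /andP[/negP ? ?]; apply: F1 => //; apply/negP.
rewrite -big_filter -[RHS]big_filter; apply/perm_big/uniq_perm.
- exact: filter_uniq.
- exact: filter_uniq.
- by move=> x; rewrite !mem_filter andbC.
Qed.

Lemma big_nat_mul (R : Type) (idx : R) (op : Monoid.law idx) t n (F : nat -> R) :
  \big[op/idx]_(0 <= k < t * n) F k
  = \big[op/idx]_(0 <= b < t) \big[op/idx]_(0 <= j < n) F (b * n + j)%N.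
Proof.
elim: t => [|t IH]; first by rewrite mul0n !big_geq.
rewrite mulSnr big_nat_recr //= -IH (big_cat_nat _ (leq_addr _ _)) //=.
rewrite -{2}[(t * n)%N]add0n big_addn addKn; congr (op _ _).
by apply: eq_bigr => j _; rewrite addnC.
Qed.

Lemma sum_block (V : nmodType) t n a (F : nat -> V) : (a < t)%N ->
  \sum_(k < t * n) (if (k %/ n == a)%N then F (k %% n)%N else 0) = \sum_(j < n) F j.
Proof.
move=> ltat; case: n F => [|n] F; first by rewrite muln0 !big_ord0.
pose G k := if (k %/ n.+1 == a)%N then F (k %% n.+1)%N else 0.
rewrite -(big_mkord xpredT G) big_nat_mul (big_cat_nat _ (ltnW ltat)) //=.
rewrite [X in _ + X]big_ltn //=.
have G0 b : b != a -> \sum_(0 <= j < n.+1) G (b * n.+1 + j)%N = 0.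
  move=> ba; apply: big1_seq => j; rewrite mem_index_iota => /andP[_ ltj].
  by rewrite /G divnMDl // divn_small // addn0 (negbTE ba).
rewrite big1_seq => [|b]; last first.
  by rewrite /= mem_index_iota => /andP[_ ba]; apply/G0; rewrite ltn_eqF.
rewrite [X in _ + (_ + X)]big1_seq => [|b]; last first.
  by rewrite /= mem_index_iota => /andP[ab _]; apply/G0; rewrite gtn_eqF.
rewrite big_mkord add0r addr0; apply: eq_bigr => j _.
by rewrite /G divnMDl // divn_small // addn0 eqxx modnMDl modn_small.
Qed.

Lemma sum_ord_narrow (V : nmodType) n p (F : nat -> V) : (p <= n)%N ->
  (forall j, (p <= j)%N -> F j = 0) -> \sum_(j < n) F j = \sum_(j < p) F j.
Proof.
move=> le_pn F0; rewrite (big_ord_widen n F le_pn).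
rewrite [LHS](bigID (fun j : 'I_n => (j < p)%N)) /=.
by rewrite [X in _ + X]big1 ?addr0 // => j; rewrite -leqNgt; exact: F0.
Qed.

Section FischerProduct.
Variable N : nat.
Implicit Types (P Q : {mpoly algC[N]}) (m : 'X_{1..N}).

Definition mfact m : nat := \prod_(j < N) (m j)`!.

Lemma mfact0 : mfact 0%MM = 1%N.
Proof. by rewrite /mfact big1 // => j _; rewrite mnm0E. Qed.

Lemma mfact_addU i m : mfact (U_(i) + m)%MM = (mfact m * (m i).+1)%N.
Proof.
rewrite /mfact (bigD1 i) //= [in RHS](bigD1 i) //= mnmDE mnm1E eqxx add1n factS.
rewrite [RHS]mulnC -mulnA; congr (_ * (_ * _))%N.
by apply: eq_bigr => j ji; rewrite mnmDE mnm1E eq_sym (negbTE ji).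
Qed.

Lemma ipZE (s : seq 'X_{1..N}) P Q : uniq s -> {subset msupp P <= s} ->
  ipZ P Q = \sum_(m <- s) P@_m * (Q@_m)^* * (mfact m)%:R.
Proof.
move=> us sPs; apply: big_uniq_support; rewrite ?msupp_uniq // => m.
  by move=> /sPs ->.
by move=> _ mP; rewrite memN_msupp_eq0 // !mul0r.
Qed.

Lemma ipZDl P1 P2 Q : ipZ (P1 + P2) Q = ipZ P1 Q + ipZ P2 Q.
Proof.
pose s := undup (msupp P1 ++ msupp P2).
have us : uniq s by exact: undup_uniq.
have sub1 : {subset msupp P1 <= s} by move=> m mP; rewrite mem_undup mem_cat mP.
have sub2 : {subset msupp P2 <= s}.
  by move=> m mP; rewrite mem_undup mem_cat mP orbT.
have sub12 : {subset msupp (P1 + P2) <= s}.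
  by move=> m /msuppD_le; rewrite mem_cat => /orP[/sub1|/sub2].
rewrite (ipZE Q us sub12) (ipZE Q us sub1) (ipZE Q us sub2) -big_split /=.
by apply: eq_bigr => m _; rewrite mcoeffD !mulrDl.
Qed.

Lemma ipZDr P Q1 Q2 : ipZ P (Q1 + Q2) = ipZ P Q1 + ipZ P Q2.
Proof.
rewrite /ipZ -big_split /=; apply: eq_bigr => m _.
by rewrite mcoeffD rmorphD /= mulrDr mulrDl.
Qed.

Lemma ipZZl c P Q : ipZ (c *: P) Q = c * ipZ P Q.
Proof.
rewrite (ipZE Q (msupp_uniq P)); last exact: msuppZ_le.
by rewrite mulr_sumr; apply: eq_bigr => m _; rewrite mcoeffZ !mulrA.
Qed.

Lemma ipZZr c P Q : ipZ P (c *: Q) = c^* * ipZ P Q.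
Proof.
rewrite /ipZ mulr_sumr; apply: eq_bigr => m _.
by rewrite mcoeffZ rmorphM /= mulrCA !mulrA.
Qed.

Lemma ipZ0l Q : ipZ 0 Q = 0.
Proof. by rewrite /ipZ msupp0 big_nil. Qed.

Lemma ipZ0r P : ipZ P 0 = 0.
Proof. by rewrite /ipZ big1 // => m _; rewrite mcoeff0 conjC0 mulr0 mul0r. Qed.

Lemma ipZ_suml (I : Type) (r : seq I) (F : I -> {mpoly algC[N]}) Q :
  ipZ (\sum_(i <- r) F i) Q = \sum_(i <- r) ipZ (F i) Q.
Proof.
exact: (big_morph (fun P => ipZ P Q) (fun P1 P2 => ipZDl P1 P2 Q) (ipZ0l Q)).
Qed.

Lemma ipZ_sumr (I : Type) (r : seq I) (F : I -> {mpoly algC[N]}) P :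
  ipZ P (\sum_(i <- r) F i) = \sum_(i <- r) ipZ P (F i).
Proof. exact: (big_morph (ipZ P) (ipZDr P) (ipZ0r P)). Qed.

Lemma ipZ_ge0 P : 0 <= ipZ P P.
Proof.
by apply: sumr_ge0 => m _; rewrite -normCK mulr_ge0 ?exprn_ge0 ?ler0n.
Qed.

Lemma ipZCl c Q : ipZ c%:MP Q = c * (Q@_0%MM)^*.
Proof.
rewrite -[c%:MP]mulr1 mul_mpolyC ipZZl /ipZ msupp1 big_seq1 mcoeff1 eqxx.
by rewrite -/(mfact 0%MM) mfact0 mul1r mulr1.
Qed.

(* This is where the factorial weights of the inner product are needed. *)
Lemma ipZMXl i P Q : ipZ ('X_i * P) Q = ipZ P (mderiv i Q).
Proof.
pose s := [seq (U_(i) + m)%MM | m <- msupp P].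
have us : uniq s.
  rewrite map_inj_uniq ?msupp_uniq // => m1 m2 /=.
  by rewrite ![(U_(i) + _)%MM]addmC; apply: addIm.
have sXPs : {subset msupp ('X_i * P) <= s}.
  by move=> m; rewrite mulrC (perm_mem (msuppMX P U_(i))).
rewrite (ipZE Q us sXPs) big_map /ipZ; apply: eq_bigr => m _.
rewrite [_ * P]mulrC mcoeffMX mcoeff_deriv mfact_addU addmC natrM.
by rewrite -/(mfact m) rmorphMn /= -[_ *+ (m i).+1]mulr_natr; ring.
Qed.

End FischerProduct.

Section LinearChangeOfVariables.
Variables (R : comNzRingType) (N : nat).
Implicit Types (P Q : {mpoly R[N]}) (h : 'M[R]_N).

Lemma mpoly_indMX (Pr : {mpoly R[N]} -> Prop) :
  (forall c, Pr c%:MP) -> (forall P Q, Pr P -> Pr Q -> Pr (P + Q)) ->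
  (forall i P, Pr P -> Pr ('X_i * P)) -> forall P, Pr P.
Proof.
move=> hC hD hX.
have hXn i k P : Pr P -> Pr ('X_i ^+ k * P).
  elim: k P => [|k IH] P HP; first by rewrite expr0 mul1r.
  by rewrite exprSr -mulrA; apply/IH/hX.
have hmono (r : seq 'I_N) m c : Pr ((\prod_(i <- r) 'X_i ^+ m i) * c%:MP).
  elim: r => [|i r IH]; first by rewrite big_nil mul1r.
  by rewrite big_cons -mulrA; apply: hXn.
elim/mpolyind => [|c m P _ _ HP]; first by rewrite -mpolyC0.
by apply: hD => //; rewrite -mul_mpolyC mulrC mpolyXE_id.
Qed.

Lemma mderiv_X i j : mderiv i ('X_j : {mpoly R[N]}) = ((j == i)%:R)%:MP.
Proof.
rewrite mderivX mnm1E; case: eqP => [->|_]; last by rewrite scale0r.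
have -> : (U_(i) - U_(i))%MM = 0%MM.
  by apply/mnmP => l; rewrite mnmBE subnn mnm0E.
by rewrite mpolyX0 scale1r.
Qed.

Lemma mcoeff0_mulX i P : ('X_i * P)@_0%MM = 0.
Proof.
rewrite [P]mpolyE mulr_sumr raddf_sum big1 // => m _.
by rewrite /= -scalerAr -mpolyXD mcoeffZ mcoeffX mnmD_eq0 mnm1_eq0 mulr0.
Qed.

(* [P \mPo linvars h] is [P(X h)], with [X] the row vector of the variables. *)
Definition linvars h : N.-tuple {mpoly R[N]} :=
  [tuple \sum_(j < N) 'X_j * (h j k)%:MP | k < N].

Lemma comp_linvarsX h k : 'X_k \mPo linvars h = \sum_(j < N) 'X_j * (h j k)%:MP.
Proof. by rewrite comp_mpolyXU nth_mktuple. Qed.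

Lemma mderiv_linvars h i k :
  mderiv i (\sum_(j < N) 'X_j * (h j k)%:MP) = (h i k)%:MP.
Proof.
rewrite raddf_sum (bigD1 i) //= big1 => [|j ji]; rewrite mderivM mderivC mulr0 addr0.
  by rewrite mderiv_X eqxx mul1r addr0.
by rewrite mderiv_X (negbTE ji) mul0r.
Qed.

Lemma mderiv_comp_linvars h i Q :
  mderiv i (Q \mPo linvars h) = \sum_(j < N) (h i j)%:MP * (mderiv j Q \mPo linvars h).
Proof.
elim/mpoly_indMX: Q => [c|P Q HP HQ|k P HP].
- by rewrite comp_mpolyC mderivC big1 // => j _; rewrite mderivC comp_mpoly0 mulr0.
- rewrite comp_mpolyD mderivD HP HQ -big_split /=; apply: eq_bigr => j _.
  by rewrite mderivD comp_mpolyD mulrDr.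
- rewrite rmorphM /= comp_linvarsX mderivM mderiv_linvars HP.
  transitivity (\sum_(j < N) ((h i j)%:MP * (((k == j)%:R)%:MP * (P \mPo linvars h))
      + (\sum_(l < N) 'X_l * (h l k)%:MP) * ((h i j)%:MP * (mderiv j P \mPo linvars h)))).
    rewrite big_split /= -mulr_sumr; congr (_ + _).
    rewrite (bigD1 k) //= eqxx mul1r big1 ?addr0 // => j jk.
    by rewrite eq_sym (negbTE jk) mul0r mulr0.
  apply: eq_bigr => j _.
  rewrite mderivM mderiv_X !rmorphD !rmorphM /= comp_mpolyC comp_linvarsX.
  ring.
Qed.

Lemma mcoeff0_comp_linvars h Q : (Q \mPo linvars h)@_0%MM = Q@_0%MM.
Proof.
elim/mpoly_indMX: Q => [c|P Q HP HQ|k P HP].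
- by rewrite comp_mpolyC.
- by rewrite comp_mpolyD !mcoeffD HP HQ.
- rewrite rmorphM /= comp_linvarsX mcoeff0_mulX mulr_suml raddf_sum big1 // => j _.
  by rewrite /= -mulrA mcoeff0_mulX.
Qed.

Lemma comp_linvarsM h1 h2 P :
  (P \mPo linvars h2) \mPo linvars h1 = P \mPo linvars (h1 *m h2).
Proof.
elim/mpoly_indMX: P => [c|P Q HP HQ|i P HP].
- by rewrite !comp_mpolyC.
- by rewrite !comp_mpolyD HP HQ.
- rewrite !rmorphM /= HP !comp_linvarsX rmorph_sum; congr (_ * _).
  under eq_bigr do rewrite rmorphM /= comp_mpolyC comp_linvarsX mulr_suml.
  rewrite exchange_big /=; apply: eq_bigr => l _.
  rewrite mxE rmorph_sum mulr_sumr; apply: eq_bigr => j _.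
  by rewrite rmorphM mulrA.
Qed.

End LinearChangeOfVariables.

Definition conjTmx m n (A : 'M[algC]_(m, n)) : 'M[algC]_(n, m) :=
  (map_mx (fun z : algC => z^*) A)^T.

(* Fischer's adjointness, by induction on [P] from [ipZMXl] and the chain rule. *)
Lemma ipZ_comp_linvars N (h : 'M[algC]_N) P Q :
  ipZ (P \mPo linvars h) Q = ipZ P (Q \mPo linvars (conjTmx h)).
Proof.
elim/mpoly_indMX: P Q => [c|P1 P2 HP1 HP2|i P HP] Q.
- by rewrite comp_mpolyC !ipZCl mcoeff0_comp_linvars.
- by rewrite comp_mpolyD !ipZDl HP1 HP2.
- rewrite rmorphM /= comp_linvarsX mulr_suml ipZ_suml ipZMXl mderiv_comp_linvars.
  rewrite ipZ_sumr; apply: eq_bigr => j _.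
  by rewrite -mulrA mul_mpolyC ipZMXl mul_mpolyC ipZZl HP ipZZr !mxE conjCK.
Qed.

Lemma conjTmxM m n p (A : 'M[algC]_(m, n)) (B : 'M[algC]_(n, p)) :
  conjTmx (A *m B) = conjTmx B *m conjTmx A.
Proof. by rewrite /conjTmx map_mxM trmx_mul. Qed.

Lemma conjTmxK m n (A : 'M[algC]_(m, n)) : conjTmx (conjTmx A) = A.
Proof. by apply/matrixP => i j; rewrite !mxE conjCK. Qed.

Lemma conjTmx_unit n (A : 'M[algC]_n) : (conjTmx A \in unitmx) = (A \in unitmx).
Proof. by rewrite unitmx_tr map_unitmx. Qed.

Lemma mulmx_conjTmx_gt0 n (w : 'rV[algC]_n) : w != 0 -> 0 < (w *m conjTmx w) 0 0.
Proof.
move=> wn0; have ge0 k : true -> 0 <= w 0 k * conjTmx w k 0.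
  by rewrite !mxE -normCK exprn_ge0.
rewrite mxE lt_def sumr_ge0 // andbT; apply: contra wn0 => /eqP /(psumr_eq0P ge0) w0.
apply/eqP/rowP => k; have /eqP := w0 k isT.
by rewrite !mxE -normCK sqrf_eq0 normr_eq0 => /eqP ->.
Qed.

Definition posdef n (A : 'M[algC]_n) :=
  forall v : 'rV[algC]_n, v != 0 -> 0 < (v *m A *m conjTmx v) 0 0.

Lemma posdef_gram n (g : 'M[algC]_n) : g \in unitmx -> posdef (conjTmx g *m g).
Proof.
move=> gu v vn0.
have -> : v *m (conjTmx g *m g) *m conjTmx v
    = (v *m conjTmx g) *m conjTmx (v *m conjTmx g).
  by rewrite conjTmxM conjTmxK !mulmxA.
apply: mulmx_conjTmx_gt0; apply: contra vn0 => /eqP vg0.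
have gu' : conjTmx g \in unitmx by rewrite conjTmx_unit.
by rewrite -(mulmxK gu' v) vg0 mul0mx.
Qed.

Lemma mx11_mulmx m (u : 'rV[algC]_m) (w : 'cV[algC]_m) (x : algC) :
  (x%:M *m u *m w) 0 0 = x * (u *m w) 0 0.
Proof. by rewrite mul_scalar_mx -scalemxAl mxE. Qed.

Lemma form_block_mx n (a al : algC) (r : 'rV[algC]_n) (c : 'cV[algC]_n)
    (D : 'M[algC]_n) (x : 'rV[algC]_n) :
  (row_mx al%:M x *m block_mx a%:M r c D *m conjTmx (row_mx al%:M x)) 0 0
  = al * a * al^* + (x *m c) 0 0 * al^* + al * (r *m conjTmx x) 0 0
    + (x *m D *m conjTmx x) 0 0.
Proof.
have ctal : conjTmx (al%:M : 'M_1) = (al^*)%:M.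
  by apply/matrixP => i j; rewrite !ord1 !mxE eqxx !mulr1n.
rewrite /conjTmx map_row_mx tr_row_mx -!/(conjTmx _) ctal mul_row_block mul_row_col.
rewrite !mulmxDl !mul_scalar_mx -!scalemxAl !mul_mx_scalar !mxE eqxx mulr1n.
ring.
Qed.

Section BlockPosdef.
Variables (n : nat) (a : algC) (r : 'rV[algC]_n) (c : 'cV[algC]_n) (D : 'M[algC]_n).
Hypothesis posB : posdef (block_mx a%:M r c D : 'M_(1 + n)).

Lemma posdef_corner_gt0 : 0 < a.
Proof.
have := @posB (row_mx 1%:M 0); rewrite row_mx_eq0 oner_eq0 => /(_ isT).
rewrite form_block_mx /conjTmx map_mx0 trmx0 mulmx0 !mul0mx !mxE conjC1.
by rewrite mulr1 !mul1r mul0r !addr0.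
Qed.

(* Test the form on [(al, x)], with [al] chosen to cancel the cross terms. *)
Lemma posdef_schur_complement : posdef (D - c *m (a^-1 *: r)).
Proof.
have an0 : a != 0 by rewrite gt_eqF ?posdef_corner_gt0.
move=> x xn0; pose al := - (a^-1 * (x *m c) 0 0).
have := @posB (row_mx al%:M x); rewrite row_mx_eq0 negb_and xn0 orbT => /(_ isT).
have -> : (x *m (D - c *m (a^-1 *: r)) *m conjTmx x) 0 0
    = (x *m D *m conjTmx x) 0 0 - a^-1 * (x *m c) 0 0 * (r *m conjTmx x) 0 0.
  rewrite mulmxBr mulmxBl mxE; congr (_ + _); rewrite mxE; congr (- _).
  rewrite mulmxA {1}[x *m c]mx11_scalar; set k := (x *m c) 0 0.
  by rewrite mx11_mulmx -scalemxAl mxE mulrCA mulrA.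
have a_real : a^* = a by rewrite geC0_conj // ltW ?posdef_corner_gt0.
rewrite form_block_mx /al rmorphN rmorphM /= fmorphV /= a_real.
congr (0 < _); field; exact: an0.
Qed.

End BlockPosdef.

Lemma posdef_LU n (A : 'M[algC]_n) : posdef A ->
  exists L U : 'M[algC]_n, [/\ is_trig_mx L, is_trig_mx U^T & A = L *m U].
Proof.
elim: n A => [|n IH] A posA.
  exists 0, 0; split; last by apply/matrixP => -[].
    by apply/is_trig_mxP => -[].
  by apply/is_trig_mxP => -[].
pose B : 'M[algC]_(1 + n) := A; pose a := B 0 0.
have defB : block_mx a%:M (ursubmx B) (dlsubmx B) (drsubmx B) = B.
  rewrite -[RHS]submxK; congr block_mx.
  by rewrite [RHS]mx11_scalar !mxE lshift0.
move: posA; rewrite -[A]/B -defB.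
set r := ursubmx B; set c := dlsubmx B; set D := drsubmx B => posA.
have an0 : a != 0 by rewrite gt_eqF ?(posdef_corner_gt0 posA).
have [L' [U' [trigL' trigU' defS]]] := IH _ (posdef_schur_complement posA).
pose L : 'M_(1 + n) := block_mx 1%:M 0 (a^-1 *: c) L'.
pose U : 'M_(1 + n) := block_mx a%:M r 0 U'.
have trigL : is_trig_mx L.
  by rewrite (is_trig_block_mx _ _ _ _ (erefl _)) eqxx scalar_mx_is_trig trigL'.
have trigU : is_trig_mx U^T.
  rewrite tr_block_mx (is_trig_block_mx _ _ _ _ (erefl _)) trmx0 eqxx trigU' andbT.
  exact: mx11_is_trig.
exists L, U; split => //.
suff defLU : (block_mx a%:M r c D : 'M_(1 + n)) = L *m U by exact: defLU.
rewrite /L /U mulmx_block !mul0mx !mulmx0 !addr0 !mul1mx -defS.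
rewrite -scalemxAl mul_mx_scalar scalerA mulVf // scale1r.
by rewrite -scalemxAl -scalemxAr addrC subrK.
Qed.

Section NatIndexedEntries.
Variable R : comNzRingType.

Lemma mxnatE m p (A : 'M[R]_(m, p)) (i : 'I_m) (j : 'I_p) : mxnat A i j = A i j.
Proof. by rewrite /mxnat !valK. Qed.

Lemma mxnat_tr m p (A : 'M[R]_(m, p)) i j : mxnat A^T i j = mxnat A j i.
Proof.
by rewrite /mxnat; case: (insub i) => [i'|]; case: (insub j) => [j'|] //; rewrite mxE.
Qed.

Lemma mxnat_trig n (A : 'M[R]_n) i j : is_trig_mx A -> (i < j)%N -> mxnat A i j = 0.
Proof.
move=> /is_trig_mxP trigA; rewrite /mxnat.
by case: insubP => [i' _ <-|//]; case: insubP => [j' _ <-|//]; apply: trigA.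
Qed.

Lemma mxnat_trigT n (A : 'M[R]_n) i j :
  is_trig_mx A^T -> (j < i)%N -> mxnat A i j = 0.
Proof. by move=> trigAT ji; rewrite -mxnat_tr mxnat_trig. Qed.

Lemma mxnat_mulmx n (A B : 'M[R]_n) i j : (i < n)%N -> (j < n)%N ->
  mxnat (A *m B) i j = \sum_(k < n) mxnat A i k * mxnat B k j.
Proof.
move=> ltin ltjn; rewrite -[i]/(val (Ordinal ltin)) -[j]/(val (Ordinal ltjn)).
by rewrite mxnatE mxE; apply: eq_bigr => k _; rewrite !mxnatE.
Qed.

End NatIndexedEntries.

Lemma mxnat_conjTmx m p (A : 'M[algC]_(m, p)) i j :
  mxnat (conjTmx A) i j = (mxnat A j i)^*.
Proof.
rewrite /mxnat; case: (insub i) => [i'|]; case: (insub j) => [j'|];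
  by rewrite ?conjC0 // !mxE.
Qed.

Section BlockDiagonal.
Variables (R : comNzRingType) (t n : nat).

(* [t] diagonal copies of [g], matching the numbering [a * n + i] of [z_(a,i)]. *)
Definition blockdiag (g : 'M[R]_n) : 'M[R]_(t * n) :=
  \matrix_(j, k) if (j %/ n == k %/ n)%N then mxnat g (j %% n)%N (k %% n)%N else 0.

Lemma blockdiag_mulmx (g h : 'M[R]_n) :
  blockdiag g *m blockdiag h = blockdiag (g *m h).
Proof.
apply/matrixP => i k; rewrite !mxE.
have n_gt0 : (0 < n)%N by case: (n) i => [|//] []; rewrite muln0.
have ltit : (i %/ n < t)%N by rewrite ltn_divLR.
case: eqP => [ik|ik].
  rewrite mxnat_mulmx ?ltn_pmod //.
  rewrite -(sum_block n (fun j => mxnat g (i %% n)%N j * mxnat h j (k %% n)%N) ltit).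
  apply: eq_bigr => j _.
  by rewrite !mxE -ik [(i %/ n)%N == _]eq_sym; case: eqP; rewrite ?mul0r.
apply: big1 => j _; rewrite !mxE.
case: eqP => [ij|_]; last by rewrite mul0r.
by case: eqP => [jk|_]; [case: ik; rewrite ij jk | rewrite mulr0].
Qed.

Lemma zvar_divn_modn (k : 'I_(t * n)) : zvar R t n (k %/ n) (k %% n) = 'X_k.
Proof.
have n_gt0 : (0 < n)%N by case: (n) k => [|//] []; rewrite muln0.
by rewrite /zvar ltn_pmod // -divn_eq valK.
Qed.

Lemma zvarE a i : (a < t)%N -> (i < n)%N ->
  exists k : 'I_(t * n), [/\ zvar R t n a i = 'X_k, (k %/ n = a)%N & (k %% n = i)%N].
Proof.
move=> ltat ltin; have n_gt0 : (0 < n)%N by case: (n) ltin.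
have ltk : (a * n + i < t * n)%N.
  by apply: (@leq_trans (a * n + n)); rewrite ?ltn_add2l // -mulSnr leq_mul2r ltat orbT.
exists (Ordinal ltk); rewrite /= divnMDl // divn_small // addn0 modnMDl modn_small //.
by rewrite /zvar ltin insubT.
Qed.

Lemma piact_linvars (g : 'M[R]_n) P : piact g P = P \mPo linvars (blockdiag g).
Proof.
congr comp_mpoly; apply: eq_from_tnth => k; rewrite !tnth_mktuple.
have n_gt0 : (0 < n)%N by case: (n) k => [|//] []; rewrite muln0.
have ltkt : (k %/ n < t)%N by rewrite ltn_divLR.
rewrite -(sum_block n (fun j => zvar R t n (k %/ n) j * (mxnat g j (k %% n))%:MP) ltkt).
apply: eq_bigr => j _.
by rewrite mxE -zvar_divn_modn; case: eqP => [->|_]; rewrite ?mulr0.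
Qed.

Lemma piact_zvar (g : 'M[R]_n) a i : (a < t)%N -> (i < n)%N ->
  piact g (zvar R t n a i) = \sum_(j < n) zvar R t n a j * (mxnat g j i)%:MP.
Proof.
move=> ltat ltin; have [k [-> kdiv kmod]] := zvarE ltat ltin.
by rewrite /piact comp_mpolyXU nth_mktuple kdiv kmod.
Qed.

End BlockDiagonal.

Lemma conjTmx_blockdiag t n (g : 'M[algC]_n) :
  conjTmx (blockdiag t g) = blockdiag t (conjTmx g).
Proof.
apply/matrixP => i k; rewrite !mxE eq_sym mxnat_conjTmx.
by case: ifP; rewrite ?conjC0.
Qed.

Definition diag_weight (R : comNzRingType) n (lam : seq nat) (A : 'M[R]_n) : R :=
  \prod_(1 <= l < (ncols lam).+1) \prod_(j < colh lam l) mxnat A j j.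

Section HighestWeightVector.
Variables (R : comNzRingType) (t n : nat).

Lemma piact_mulmx (g h : 'M[R]_n) (P : {mpoly R[t * n]}) :
  piact (g *m h) P = piact g (piact h P).
Proof. by rewrite !piact_linvars comp_linvarsM blockdiag_mulmx. Qed.

(* An upper triangular [U] adds to each column of [z] multiples of the earlier ones
   only, so it rescales every leading minor of [z]. *)
Lemma piact_det_zvar_trig (U : 'M[R]_n) p :
  (p <= t)%N -> (p <= n)%N -> is_trig_mx U^T ->
  piact U (\det (\matrix_(a < p, b < p) zvar R t n a b))
  = (\prod_(j < p) mxnat U j j)%:MP * \det (\matrix_(a < p, b < p) zvar R t n a b).
Proof.
move=> le_pt le_pn trigU; rewrite /piact -det_map_mx /=.
set Z := \matrix_(a < p, b < p) zvar R t n a b.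
set Up := \matrix_(a < p, b < p) (mxnat U a b)%:MP : 'M[{mpoly R[t * n]}]_p.
have -> : map_mx (piact U) Z = Z *m Up.
  apply/matrixP => a b; rewrite !mxE.
  rewrite piact_zvar ?(leq_trans (ltn_ord a) le_pt) ?(leq_trans (ltn_ord b) le_pn) //.
  rewrite (sum_ord_narrow (F := fun j => zvar R t n a j * (mxnat U j b)%:MP) le_pn).
    by apply: eq_bigr => j _; rewrite !mxE.
  by move=> j le_pj; rewrite mxnat_trigT ?mulr0 // (leq_trans (ltn_ord b) le_pj).
rewrite det_mulmx mulrC -det_tr det_trig.
  by rewrite rmorph_prod; congr (_ * _); apply: eq_bigr => j _; rewrite !mxE.
by apply/is_trig_mxP => i j ij; rewrite !mxE mxnat_trigT.
Qed.

Lemma piact_eU_trig (U : 'M[R]_n) lam :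
  size lam = t -> (t <= n)%N -> is_trig_mx U^T ->
  piact U (eU R t n lam) = (diag_weight lam U)%:MP * eU R t n lam.
Proof.
move=> sz_lam le_tn trigU; rewrite /eU /piact !rmorph_prod -big_split /=.
apply: eq_bigr => l _; have le_colh : (colh lam l <= t)%N by rewrite -sz_lam count_size.
by rewrite -/(piact _ _) piact_det_zvar_trig // (leq_trans le_colh le_tn).
Qed.

End HighestWeightVector.

Lemma lpminor_mulmx_trig n (L U : 'M[algC]_n) p : (p <= n)%N ->
  is_trig_mx L -> is_trig_mx U^T ->
  lpminor (L *m U) p = \prod_(j < p) (mxnat L j j * mxnat U j j).
Proof.
move=> le_pn trigL trigU; rewrite /lpminor.
set Lp := \matrix_(i < p, j < p) mxnat L i j.
set Up := \matrix_(i < p, j < p) mxnat U i j.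
have -> : \matrix_(i < p, j < p) mxnat (L *m U) i j = Lp *m Up.
  apply/matrixP => i j; rewrite !mxE mxnat_mulmx ?(leq_trans (ltn_ord _) le_pn) //.
  rewrite (sum_ord_narrow (F := fun k => mxnat L i k * mxnat U k j) le_pn).
    by apply: eq_bigr => k _; rewrite !mxE.
  by move=> k le_pk; rewrite mxnat_trig ?mul0r // (leq_trans (ltn_ord i) le_pk).
rewrite det_mulmx -[\det Up]det_tr !det_trig -?big_split.
- by apply: eq_bigr => j _; rewrite !mxE.
- by apply/is_trig_mxP => i j ij; rewrite !mxE mxnat_trigT.
- by apply/is_trig_mxP => i j ij; rewrite !mxE mxnat_trig.
Qed.

Lemma prod_lpminor_mulmx_trig n lam (L U : 'M[algC]_n) : (size lam <= n)%N ->
  is_trig_mx L -> is_trig_mx U^T ->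
  \prod_(1 <= l < (ncols lam).+1) lpminor (L *m U) (colh lam l)
  = diag_weight lam L * diag_weight lam U.
Proof.
move=> le_lam_n trigL trigU; rewrite /diag_weight -big_split; apply: eq_bigr => l _.
rewrite lpminor_mulmx_trig ?big_split //.
by apply: leq_trans le_lam_n; rewrite count_size.
Qed.

Lemma diag_weight_conjTmx n lam (A : 'M[algC]_n) :
  diag_weight lam (conjTmx A) = (diag_weight lam A)^*.
Proof.
rewrite /diag_weight rmorph_prod; apply: eq_bigr => l _.
by rewrite rmorph_prod; apply: eq_bigr => j _; rewrite mxnat_conjTmx.
Qed.

Lemma ipZ_piact t n (g : 'M[algC]_n) P Q :
  ipZ (piact g P) Q = ipZ P (@piact algC t n (conjTmx g) Q).
Proof. by rewrite !piact_linvars ipZ_comp_linvars conjTmx_blockdiag. Qed.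

(* Moved across the inner product, the lower triangular factor [L] becomes upper
   triangular, so both factors act on the highest weight vector by scalars. *)
Lemma ipZ_piact_eU t n lam (g L U : 'M[algC]_n) :
  size lam = t -> (t <= n)%N -> is_trig_mx L -> is_trig_mx U^T ->
  conjTmx g *m g = L *m U ->
  ipZ (piact g (eU algC t n lam)) (piact g (eU algC t n lam))
  = (diag_weight lam L * diag_weight lam U)^*
    * ipZ (eU algC t n lam) (eU algC t n lam).
Proof.
move=> sz_lam le_tn trigL trigU gLU; set e := eU algC t n lam.
have trigLT : is_trig_mx (conjTmx L)^T.
  by apply/is_trig_mxP => i j ij; rewrite !mxE (is_trig_mxP trigL) ?conjC0.
rewrite ipZ_piact -piact_mulmx gLU piact_mulmx (piact_eU_trig sz_lam le_tn trigU).
rewrite /piact rmorphM /= comp_mpolyC -/(piact _ _) mul_mpolyC ipZZr.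
rewrite -[L]conjTmxK -ipZ_piact (piact_eU_trig sz_lam le_tn trigLT) mul_mpolyC ipZZl.
by rewrite conjTmxK diag_weight_conjTmx rmorphM mulrA [_^* * _^*]mulrC.
Qed.

Lemma dv_gt0 (k : fieldType) (sigma : {rmorphism k -> algC}) : (0 < dv sigma)%N.
Proof. by rewrite /dv; case: excluded_middle_informative. Qed.

Lemma powhalfM d (x y : algC) : 0 <= x -> 0 <= y ->
  powhalf d (x * y) = powhalf d x * powhalf d y.
Proof. by move=> x_ge0 y_ge0; rewrite /powhalf sqrtCM ?nnegrE // exprMn. Qed.

Lemma Hv_scale (k : fieldType) (sigma : {rmorphism k -> algC}) n lam X Y c :
  ipZ X X = c^* * ipZ Y Y ->
  @Hv k sigma n lam X = powhalf (dv sigma) c * @Hv k sigma n lam Y.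
Proof.
move=> normXY; rewrite /Hv mulrCA; congr (_ * _).
have [Y0|Yn0] := eqVneq (ipZ Y Y) 0.
  rewrite normXY Y0 mulr0 /powhalf sqrtC0 expr0n.
  by rewrite eqn0Ngt dv_gt0 mulr0.
have Y_gt0 : 0 < ipZ Y Y by rewrite lt_def Yn0 ipZ_ge0.
have c_ge0 : 0 <= c^* by rewrite -(pmulr_lge0 _ Y_gt0) -normXY ipZ_ge0.
have cE : c^* = c by rewrite -[RHS]conjCK (geC0_conj c_ge0).
by rewrite normXY cE powhalfM ?ipZ_ge0 // -cE.
Qed.

Theorem mainTheorem2
  (k : fieldExtType rat)                     (* number field *)
  (sigma : {rmorphism k -> algC})            (* archimedean place v *)
  (n : nat) (lam : seq nat)
  (hlam : is_partition lam) (htn : (size lam <= n)%N)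
  (g : 'M[k]_n) (hg : g \in unitmx) :
  let gv := map_mx sigma g in
  let G := gstar sigma gv *m gv in
  @Hv k sigma n lam (piact gv (eU algC (size lam) n lam))
  = powhalf (dv sigma)
      (\prod_(1 <= l < (ncols lam).+1) lpminor G (colh lam l))
    * @Hv k sigma n lam (eU algC (size lam) n lam).
Proof.
move=> gv G.
have gstarE : gstar sigma gv = conjTmx gv.
  rewrite /gstar; case: excluded_middle_informative => // real_sigma.
  by apply/matrixP => i j; rewrite !mxE conj_Creal.
have gv_unit : gv \in unitmx by rewrite map_unitmx.
have [L [U [trigL trigU GLU]]] := posdef_LU (posdef_gram gv_unit).
rewrite /G gstarE GLU prod_lpminor_mulmx_trig //.
by apply: Hv_scale; rewrite (ipZ_piact_eU _ _ trigL trigU GLU).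
Qed.
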